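(* Let $(\mathsf P,\mathcal O)$ be a semitopology. Then every topen set $T$ is contained in a unique maximal topen set (maximal with respect to subset inclusion among topen sets).
   Context: A semitopology is a pair $(\mathsf P,\mathcal O)$ where $\mathsf P$ is a set and $\mathcal O\subseteq\mathcal P(\mathsf P)$ contains $\varnothing$ and $\mathsf P$ and is closed under arbitrary unions. Write $X\between Y$ when $X\cap Y\neq\varnothing$. A set $T\subseteq\mathsf P$ is transitive when for all $O,O'\in\mathcal O$, $O\between T$ and $T\between O'$ imply $O\between O'$. A set is topen when it is nonempty, open, and transitive. *)

Set Implicit Arguments.

Definition pset (P : Type) := P -> Prop.

Definition subset {P : Type} (X Y : pset P) : Prop := forall x, X x -> Y x.

Definition between {P : Type} (X Y : pset P) : Prop := exists x, X x /\ Y x.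

Record semitopology (P : Type) (O : pset P -> Prop) : Prop := {
  (* O is a family of *sets*: it respects extensional equality of predicates *)
  st_ext   : forall X Y : pset P, (forall x, X x <-> Y x) -> O X -> O Y;
  st_empty : O (fun _ => False);
  st_full  : O (fun _ => True);
  st_union : forall (I : Type) (F : I -> pset P),
      (forall i, O (F i)) -> O (fun x => exists i, F i x)
}.

Definition transitive {P : Type} (O : pset P -> Prop) (T : pset P) : Prop :=
  forall U U' : pset P, O U -> O U' -> between U T -> between T U' -> between U U'.

Definition topen {P : Type} (O : pset P -> Prop) (T : pset P) : Prop :=
  (exists x, T x) /\ O T /\ transitive O T.

Definition maximal_topen {P : Type} (O : pset P -> Prop) (T : pset P) : Prop :=
  topen O T /\ forall T', topen O T' -> subset T T' -> subset T' T.


Set Implicit Arguments.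

(* The maximal topen set containing a topen [T] is the union of all topen sets
   meeting [T].  It is open as a union of opens, and transitive because any two
   of its members are linked through [T]: if [U] meets [T1] and [T2] meets [U'],
   transitivity of [T1], [T] and [T2] in turn gives that [U] meets [U']. *)

Section TopenComponent.

Variables (P : Type) (O : pset P -> Prop).
Hypothesis HO : semitopology O.

Definition bigcup (Q : pset P -> Prop) : pset P := fun x => exists X, Q X /\ X x.

Lemma between_sym (X Y : pset P) : between X Y -> between Y X.
Proof. intros [x [Xx Yx]]. exists x; auto. Qed.

Lemma between_nonempty_subset (X Y : pset P) :
  (exists x, X x) -> subset X Y -> between X Y.
Proof. intros [x Xx] XY. exists x; auto. Qed.

Lemma open_bigcup (Q : pset P -> Prop) : (forall X, Q X -> O X) -> O (bigcup Q).
Proof.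
  intros QO.
  apply (st_ext HO (fun x => exists i : {X | Q X}, proj1_sig i x)).
  - intro x; split.
    + intros [[X QX] Xx]. exists X; auto.
    + intros [X [QX Xx]]. exists (exist _ X QX); auto.
  - apply (st_union HO). intros [X QX]. exact (QO X QX).
Qed.

Lemma transitive_bigcup_meeting (T : pset P) (Q : pset P -> Prop) :
  O T -> transitive O T ->
  (forall X, Q X -> O X /\ transitive O X /\ between X T) ->
  transitive O (bigcup Q).
Proof.
  intros OT TT HQ U U' OU OU' [u [Uu [X1 [QX1 X1u]]]] [v [[X2 [QX2 X2v]] U'v]].
  destruct (HQ X1 QX1) as [_ [TX1 X1T]].
  destruct (HQ X2 QX2) as [_ [TX2 X2T]].
  assert (UT : between U T) by (apply (TX1 U T); auto; exists u; auto).
  assert (TU' : between T U').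
  { apply (TX2 T U'); auto using between_sym. exists v; auto. }
  exact (TT U U' OU OU' UT TU').
Qed.

Definition topen_component (T : pset P) : pset P :=
  bigcup (fun X => topen O X /\ between X T).

Section Component.

Variable T : pset P.
Hypothesis HT : topen O T.

Lemma subset_topen_component : subset T (topen_component T).
Proof.
  intros x Tx. exists T. split; [split |]; auto.
  apply between_nonempty_subset; [apply HT | intros y; auto].
Qed.

Lemma topen_component_topen : topen O (topen_component T).
Proof.
  destruct HT as [[t Tt] [OT TT]].
  split; [exists t; apply subset_topen_component; auto | split].
  - apply open_bigcup. intros X [[_ [OX _]] _]. exact OX.
  - apply (@transitive_bigcup_meeting T); auto.
    intros X [[_ HX] XT]. tauto.
Qed.

Lemma subset_topen_component_meeting (X : pset P) :
  topen O X -> between X T -> subset X (topen_component T).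
Proof. intros HX XT x Xx. exists X; auto. Qed.

Lemma topen_component_maximal : maximal_topen O (topen_component T).
Proof.
  split; [exact topen_component_topen |].
  intros X HX CX. apply subset_topen_component_meeting; auto.
  apply between_sym, between_nonempty_subset; [apply HT |].
  intros x Tx. apply CX, subset_topen_component; auto.
Qed.

Lemma maximal_topen_eq_component (M : pset P) :
  maximal_topen O M -> subset T M -> forall x, M x <-> topen_component T x.
Proof.
  intros [HM maxM] TM.
  assert (MC : subset M (topen_component T)).
  { apply subset_topen_component_meeting; auto.
    apply between_sym, between_nonempty_subset; auto. apply HT. }
  intro x; split; [apply MC | apply (maxM _ topen_component_topen MC)].
Qed.

End Component.

End TopenComponent.

Theorem corollary3p13 (P : Type) (O : pset P -> Prop) (HO : semitopology O)
  (T : pset P) (HT : topen O T) :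
  exists M : pset P, (maximal_topen O M /\ subset T M) /\
    forall M' : pset P, maximal_topen O M' -> subset T M' ->
      forall x, M' x <-> M x.
Proof.
  exists (topen_component O T). split.
  - split; [apply topen_component_maximal | apply subset_topen_component]; auto.
  - intros M' HM' TM'. apply maximal_topen_eq_component; auto.
Qed.
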